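(* Let $d\ge2$ and let $g:\mathbb{R}\to\mathbb{R}$ be a locally Lipschitz function. Assume that for every bounded interval $[a,b]$ there is a separately convex function $f_{[a,b]}:\mathbb{R}^d\to\mathbb{R}$ such that $f_{[a,b]}(u,u,\dots,u)=g(u)$ for each $u\in[a,b]$. Then there is a separately convex function $f:\mathbb{R}^d\to\mathbb{R}$ such that $f(u,u,\dots,u)=g(u)$ for each $u\in\mathbb{R}$.
   Context: A function $f:\mathbb{R}^d\to\mathbb{R}$ is called separately convex if it is convex on every line parallel to a coordinate axis. *)

From Stdlib Require Import Reals.
From mathcomp Require Import ssreflect ssrfun ssrbool eqtype ssrnat fintype.
Open Scope R_scope.

Definition point (d : nat) := 'I_d -> R.

Definition upd {d : nat} (x : point d) (i : 'I_d) (t : R) : point d :=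
  fun j => if j == i then t else x j.

Definition convex_fun (h : R -> R) : Prop :=
  forall s t lam, 0 <= lam <= 1 ->
    h (lam * s + (1 - lam) * t) <= lam * h s + (1 - lam) * h t.

Definition separately_convex {d : nat} (f : point d -> R) : Prop :=
  forall (x : point d) (i : 'I_d), convex_fun (fun t => f (upd x i t)).

Definition diag (d : nat) (u : R) : point d := fun _ => u.

Definition locally_lipschitz (g : R -> R) : Prop :=
  forall a b : R, exists L : R, forall x y : R,
    a <= x <= b -> a <= y <= b -> Rabs (g x - g y) <= L * Rabs (x - y).

(* Choose, for every integer m, a separately convex F_m with F_m(u,...,u) = g(u) on
   [m-1, m+2].  For a <= b and two distinct coordinates p = x_0, q = x_1, the function
     P_[a,b](p, q) = W_b(p, q) + W_{-a}(-p, -q),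
     W_c(p, q) = (c - p)^+ (c - q)^+ - (p - c)(q - c),
   is convex in each variable, vanishes when p, q in [a, b], and on the diagonal equals
   -dist(u, [a,b])^2.  Adding to F_m a locally finite combination of the P_[m-j, m+1+j]
   with weights dominating F_m - g near the diagonal gives a separately convex h_m with
   h_m <= g on the whole diagonal and h_m = g on [m, m+1]; a large multiple of P_[m, m+1]
   further forces h_m <= 0 on the cube of radius |m| - 2.  Hence f = sup_m h_m is finite,
   separately convex, and equals g on the diagonal.  The Lipschitz hypothesis is only
   used to bound g on compact sets. *)
From Stdlib Require Import Reals Lra Lia ZArith Psatz ClassicalEpsilon FunctionalExtensionality.
From mathcomp Require Import ssreflect ssrfun ssrbool eqtype ssrnat seq fintype.
From mathcomp Require Import zify.
Open Scope R_scope.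

Lemma Rabs_le_bounds (r t : R) : Rabs t <= r -> - r <= t <= r.
Proof. by have := Rle_abs t; have := Rle_abs (- t); rewrite Rabs_Ropp; lra. Qed.

Lemma convex_fun_add (h k : R -> R) :
  convex_fun h -> convex_fun k -> convex_fun (fun t => h t + k t).
Proof. move=> Hh Hk s t l Hl; have := Hh s t l Hl; have := Hk s t l Hl; lra. Qed.

Lemma convex_fun_reflect (h : R -> R) : convex_fun h -> convex_fun (fun t => h (- t)).
Proof.
move=> Hh s t l Hl /=.
have -> : - (l * s + (1 - l) * t) = l * - s + (1 - l) * - t by ring.
exact: Hh.
Qed.

Lemma convex_fun_hinge (a : R) : convex_fun (fun t => Rmax 0 (a - t)).
Proof.
move=> s t l Hl.
have := Rmax_l 0 (a - s); have := Rmax_r 0 (a - s).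
have := Rmax_l 0 (a - t); have := Rmax_r 0 (a - t).
move=> *; apply: Rmax_lub; nra.
Qed.

Lemma convex_fun_le_endpoints (h : R -> R) (a b t : R) :
  convex_fun h -> a <= t <= b -> h t <= Rmax (h a) (h b).
Proof.
move=> Hh Ht; have [Hab|Hab] : a = b \/ a < b by lra.
  rewrite (_ : t = a); [exact: Rmax_l|lra].
set l := (b - t) / (b - a).
have Hinv : (b - a) * / (b - a) = 1 by field; lra.
have := Rinv_0_lt_compat (b - a) ltac:(lra).
have Hl : 0 <= l <= 1 by rewrite /l /Rdiv; split; nra.
have Et : l * a + (1 - l) * b = t by rewrite /l; field; lra.
have := Hh a b l Hl; rewrite Et.
have := Rmax_l (h a) (h b); have := Rmax_r (h a) (h b); nra.
Qed.

Lemma upd_id {d} (x : point d) i : upd x i (x i) = x.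
Proof. by apply: functional_extensionality => j; rewrite /upd; case: eqP => [->|]. Qed.

Lemma upd_upd {d} (x : point d) i s t : upd (upd x i s) i t = upd x i t.
Proof. by apply: functional_extensionality => j; rewrite /upd; case: eqP. Qed.

Lemma updC {d} (x : point d) i k s t :
  i != k -> upd (upd x i s) k t = upd (upd x k t) i s.
Proof.
move=> Hik; apply: functional_extensionality => j; rewrite /upd.
by case: eqP => [->|//]; rewrite eq_sym (negbTE Hik).
Qed.

Lemma separately_convex_add {d} (f h : point d -> R) :
  separately_convex f -> separately_convex h -> separately_convex (fun x => f x + h x).
Proof. by move=> Hf Hh x i; apply: convex_fun_add; [apply: Hf|apply: Hh]. Qed.

Lemma separately_convex_scale {d} (c : R) (f : point d -> R) :
  0 <= c -> separately_convex f -> separately_convex (fun x => c * f x).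
Proof.
move=> Hc Hf x i s t l Hl /=.
have := Rmult_le_compat_l c _ _ Hc (Hf x i s t l Hl); lra.
Qed.

Lemma separately_convex_upd {d} (f : point d -> R) (k : 'I_d) (c : R) :
  separately_convex f -> separately_convex (fun x => f (upd x k c)).
Proof.
move=> Hf x i s t l Hl /=.
case: (eqVneq i k) => [->|Hik]; first by rewrite !upd_upd; lra.
by rewrite !(updC _ _ _ _ _ Hik); apply: Hf.
Qed.

Lemma separately_convex_sym_pair {d} (phi : R -> R -> R) (i0 i1 : 'I_d) :
  i0 != i1 -> (forall p q, phi p q = phi q p) -> (forall q, convex_fun (phi^~ q)) ->
  separately_convex (fun x => phi (x i0) (x i1)).
Proof.
move=> H01 Hsym Hcvx x i s t l Hl /=; rewrite /upd.
case: (eqVneq i i0) => [->|Hi0]; first by rewrite eq_sym (negbTE H01); apply: Hcvx.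
case: (eqVneq i i1) => [_|_]; last lra.
by rewrite !(Hsym (x i0)); apply: Hcvx.
Qed.

Lemma separately_convex_lub {d} {I : Type} (h : I -> point d -> R) (f : point d -> R) :
  (forall m, separately_convex (h m)) ->
  (forall x, is_lub (fun r => exists m, r = h m x) (f x)) ->
  separately_convex f.
Proof.
move=> Hh Hf x i s t l Hl /=.
have [_ Hleast] := Hf (upd x i (l * s + (1 - l) * t)).
apply: Hleast => _ [m ->].
have [Hs _] := Hf (upd x i s); have [Ht _] := Hf (upd x i t).
have := Rmult_le_compat_l l _ _ (proj1 Hl) (Hs _ (ex_intro _ m erefl)).
have := Rmult_le_compat_l (1 - l) _ _ ltac:(lra) (Ht _ (ex_intro _ m erefl)).
have := Hh m x i s t l Hl; rewrite /=; lra.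
Qed.

(* Induction on the number of free coordinates: a free coordinate k is a convex combination
   of the values r and -r, and the face x_k = -r is handled by the induction hypothesis for
   the separately convex function f (upd _ k (-r)). *)
Lemma separately_convex_bounded_on_faces {d} (r : R) (k : nat) : 0 < r ->
  forall f : point d -> R, separately_convex f -> exists K, forall x,
    (forall i, Rabs (x i) <= r) -> (forall i : 'I_d, (k <= i)%N -> x i = r) -> f x <= K.
Proof.
move=> Hr; elim: k => [|k IH] f Hf.
  exists (f (fun _ => r)) => x _ Hx.
  have -> : x = (fun _ => r) by apply: functional_extensionality => i; apply: Hx.
  exact: Rle_refl.
have [Hkd|Hdk] := ltnP k d; last first.
  have [K HK] := IH f Hf; exists K => x Hb Hx; apply: HK => // i Hi.
  by have := ltn_ord i; lia.
set ik : 'I_d := Ordinal Hkd.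
have [K1 HK1] := IH f Hf.
have [K2 HK2] := IH _ (separately_convex_upd f ik (- r) Hf).
exists (Rmax K1 K2) => x Hb Hx.
set y := upd x ik r.
have Hy : (forall i, Rabs (y i) <= r) /\ (forall i : 'I_d, (k <= i)%N -> y i = r).
  split=> i; rewrite /y /upd; case: eqP => [_|Hne]; [rewrite Rabs_right; lra|exact: Hb|by []|].
  move=> Hi; apply: Hx; suff : nat_of_ord i <> k by lia.
  by move=> E; apply: Hne; apply: val_inj.
have Hxk := Rabs_le_bounds _ _ (Hb ik).
rewrite -(upd_id x ik).
apply: Rle_trans (convex_fun_le_endpoints _ _ _ _ (Hf x ik) Hxk) _.
apply: Rmax_lub.
- apply: Rle_trans (Rmax_r _ _).
  by rewrite -(upd_upd x ik r); apply: HK2; case: Hy.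
- by apply: Rle_trans (Rmax_l _ _); apply: HK1; case: Hy.
Qed.

Lemma separately_convex_bounded_above {d} (f : point d -> R) (r : R) :
  separately_convex f -> exists K, forall x, (forall i, Rabs (x i) <= r) -> f x <= K.
Proof.
move=> Hf; have Hr : 0 < Rmax r 1 by have := Rmax_r r 1; lra.
have [K HK] := separately_convex_bounded_on_faces _ d Hr f Hf.
exists K => x Hx; apply: HK => [i|i Hi]; last by have := ltn_ord i; lia.
exact: Rle_trans (Hx i) (Rmax_l _ _).
Qed.

Lemma Rmax0_cases r : (r <= 0 /\ Rmax 0 r = 0) \/ (0 <= r /\ Rmax 0 r = r).
Proof.
have [Hr|Hr] := Rle_dec r 0; [left|right]; split; try lra.
  exact: Rmax_left.
by apply: Rmax_right; lra.
Qed.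

Definition wedge (c p q : R) := Rmax 0 (c - p) * Rmax 0 (c - q) - (p - c) * (q - c).

Lemma wedgeC c p q : wedge c p q = wedge c q p.
Proof. rewrite /wedge; ring. Qed.

Lemma convex_wedge c q : convex_fun (fun p => wedge c p q).
Proof.
move=> s t l Hl; rewrite /wedge.
have := convex_fun_hinge c s t l Hl; have := Rmax_l 0 (c - q); rewrite /=; nra.
Qed.

Lemma wedge_eq0 c p q : p <= c -> q <= c -> wedge c p q = 0.
Proof. by move=> Hp Hq; rewrite /wedge !Rmax_right; lra || ring. Qed.

Lemma wedge_le_m1 c p q : c + 1 <= p -> c + 1 <= q -> wedge c p q <= -1.
Proof. move=> Hp Hq; rewrite /wedge !Rmax_left; nra. Qed.

Lemma wedge_diag_le0 c u : wedge c u u <= 0.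
Proof.
by rewrite /wedge; case: (Rmax0_cases (c - u)) => [[? ->]|[? ->]]; nra.
Qed.

Lemma wedge_le_sqr c p q : wedge c p q <= (p - q) ^ 2.
Proof.
rewrite /wedge; have := pow2_ge_0 (p + q - 2 * c); have := pow2_ge_0 (p - q).
by case: (Rmax0_cases (c - p)) => [[? ->]|[? ->]];
  case: (Rmax0_cases (c - q)) => [[? ->]|[? ->]]; nra.
Qed.

(* On the diagonal, interval_penalty a b u u = - dist(u, [a, b])^2. *)
Definition interval_penalty (a b p q : R) := wedge b p q + wedge (- a) (- p) (- q).

Lemma interval_penaltyC a b p q : interval_penalty a b p q = interval_penalty a b q p.
Proof. by rewrite /interval_penalty wedgeC (wedgeC (- a)). Qed.

Lemma convex_interval_penalty a b q : convex_fun (fun p => interval_penalty a b p q).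
Proof.
apply: convex_fun_add; first exact: convex_wedge.
exact: (convex_fun_reflect (fun p => wedge (- a) p (- q)) (convex_wedge _ _)).
Qed.

Lemma interval_penalty_eq0 a b p q :
  a <= p <= b -> a <= q <= b -> interval_penalty a b p q = 0.
Proof. by move=> Hp Hq; rewrite /interval_penalty !wedge_eq0; lra. Qed.

Lemma interval_penalty_outside a b p q : a <= b ->
  (p <= a - 1 /\ q <= a - 1) \/ (b + 1 <= p /\ b + 1 <= q) -> interval_penalty a b p q <= -1.
Proof.
rewrite /interval_penalty => Hab [[Hp Hq]|[Hp Hq]].
  by rewrite wedge_eq0; [have := wedge_le_m1 (- a) (- p) (- q)|..]; lra.
by rewrite (wedge_eq0 (- a)); [have := wedge_le_m1 b p q|..]; lra.
Qed.

Lemma interval_penalty_diag_le0 a b u : interval_penalty a b u u <= 0.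
Proof.
have := wedge_diag_le0 b u; have := wedge_diag_le0 (- a) (- u).
by rewrite /interval_penalty; lra.
Qed.

Lemma interval_penalty_le a b p q : interval_penalty a b p q <= 2 * (p - q) ^ 2.
Proof.
have := wedge_le_sqr b p q; have := wedge_le_sqr (- a) (- p) (- q).
by rewrite /interval_penalty; nra.
Qed.

Fixpoint fsum (phi : nat -> R) (n : nat) : R :=
  match n with O => 0 | S k => fsum phi k + phi k end.

Lemma fsum_le phi psi n :
  (forall j, (j < n)%N -> phi j <= psi j) -> fsum phi n <= fsum psi n.
Proof.
elim: n => [|n IH] H /=; first lra.
have := IH (fun j Hj => H j (ltnW Hj)); have := H n (ltnSn n); lra.
Qed.

Lemma fsum_ge0 phi n : (forall j, (j < n)%N -> 0 <= phi j) -> 0 <= fsum phi n.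
Proof.
elim: n => [|n IH] H /=; first lra.
have := IH (fun j Hj => H j (ltnW Hj)); have := H n (ltnSn n); lra.
Qed.

Lemma fsum_le0 phi n : (forall j, (j < n)%N -> phi j <= 0) -> fsum phi n <= 0.
Proof.
elim: n => [|n IH] H /=; first lra.
have := IH (fun j Hj => H j (ltnW Hj)); have := H n (ltnSn n); lra.
Qed.

Lemma fsum_le_term phi n k :
  (forall j, (j < n)%N -> phi j <= 0) -> (k < n)%N -> fsum phi n <= phi k.
Proof.
elim: n => [//|n IH] H Hk /=.
have Hn := H n (ltnSn n); have Hlt j : (j < n)%N -> (j < n.+1)%N := @ltnW j n.
move: Hk; rewrite ltnS leq_eqVlt => /orP [/eqP ->|Hk].
  by have := fsum_le0 phi n (fun j Hj => H j (Hlt j Hj)); lra.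
by have := IH (fun j Hj => H j (Hlt j Hj)) Hk; lra.
Qed.

Lemma fsum_lin phi psi a b n :
  fsum (fun j => a * phi j + b * psi j) n = a * fsum phi n + b * fsum psi n.
Proof. by elim: n => [|n IH] /=; [|rewrite IH]; ring. Qed.

Lemma fsum_stable phi n n' :
  (n <= n')%N -> (forall j, (n <= j)%N -> phi j = 0) -> fsum phi n' = fsum phi n.
Proof.
move=> + H; elim: n' => [|n' IH]; first by rewrite leqn0 => /eqP ->.
rewrite leq_eqVlt => /orP [/eqP <-//|Hn] /=.
by rewrite IH // H //; ring.
Qed.

Lemma separately_convex_fsum {d} (psi : nat -> point d -> R) (N : point d -> nat) :
  (forall j, separately_convex (psi j)) -> (forall x j, (N x <= j)%N -> psi j x = 0) ->
  separately_convex (fun x => fsum (fun j => psi j x) (N x)).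
Proof.
move=> Hpsi Hfin x i s t l Hl /=.
set ps := upd x i s; set pt := upd x i t; set pm := upd x i (l * s + (1 - l) * t).
set n := maxn (N pm) (maxn (N ps) (N pt)).
have Hn y : (N y <= n)%N -> fsum (fun j => psi j y) n = fsum (fun j => psi j y) (N y).
  by move=> Hy; apply: fsum_stable => // j Hj; apply: Hfin.
rewrite -!Hn; try lia.
rewrite -fsum_lin; apply: fsum_le => j _; exact: (Hpsi j x i s t l Hl).
Qed.

Lemma lt_INR_of_up r j : (Z.to_nat (up r) <= j)%N -> r < INR j.
Proof.
move=> /leP Hj; have [Hr _] := archimed r.
apply: Rlt_le_trans Hr _; rewrite INR_IZR_INZ; apply: IZR_le; lia.
Qed.

Lemma exists_nat_between r : -1 < r -> exists j : nat, r < INR j <= r + 1.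
Proof.
move=> Hr; have [H1 H2] := archimed r.
have Hup : (0 <= up r)%Z by have := lt_IZR (-1) (up r) ltac:(lra); lia.
by exists (Z.to_nat (up r)); rewrite INR_IZR_INZ Z2Nat.id //; lra.
Qed.

Lemma bounded_on_finite_range (h : Z -> R) (n : nat) :
  exists B, forall m, (Z.abs m <= Z.of_nat n)%Z -> h m <= B.
Proof.
elim: n => [|n [B HB]].
  by exists (h 0%Z) => m Hm; rewrite (_ : m = 0%Z); [lra|lia].
exists (Rmax B (Rmax (h (Z.of_nat n.+1)) (h (- Z.of_nat n.+1)%Z))) => m Hm.
have [Hmn|Hmn] := Z_le_dec (Z.abs m) (Z.of_nat n).
  exact: Rle_trans (HB m Hmn) (Rmax_l _ _).
apply: Rle_trans (Rmax_r _ _).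
have [->|->] : m = Z.of_nat n.+1 \/ m = (- Z.of_nat n.+1)%Z by lia.
  exact: Rmax_l.
exact: Rmax_r.
Qed.

Lemma point_bounded {d} (x : point d) : exists r, forall i, Rabs (x i) <= r.
Proof.
pose bound s := foldr (fun i r => Rmax (Rabs (x i)) r) 0 s.
have Hbound s i : i \in s -> Rabs (x i) <= bound s.
  elim: s => [//|j s IH]; rewrite inE => /orP [/eqP ->|/IH Hs] /=; first exact: Rmax_l.
  exact: Rle_trans Hs (Rmax_r _ _).
by exists (bound (enum 'I_d)) => i; apply: Hbound; rewrite mem_enum.
Qed.

Lemma far_index (a u : R) : ~ (a - 1 <= u <= a + 2) ->
  exists j : nat, (u <= a - INR j - 1 \/ a + INR j + 2 <= u) /\ Rabs u <= Rabs a + INR j + 3.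
Proof.
move=> Hu; have Ha := Rabs_le_bounds _ a (Rle_refl _).
have Habs j : a - INR j - 2 < u < a + INR j + 3 -> Rabs u <= Rabs a + INR j + 3.
  by move=> Hj; apply: Rabs_le; have := pos_INR j; lra.
have [Hlo|Hhi] : u < a - 1 \/ a + 2 < u by lra.
  have [j Hj] := exists_nat_between (a - u - 2) ltac:(lra).
  by exists j; split; [left|apply: Habs]; lra.
have [j Hj] := exists_nat_between (u - a - 3) ltac:(lra).
by exists j; split; [right|apply: Habs]; lra.
Qed.

Section Minorant.

Context {d : nat}.
Variables (i0 i1 : 'I_d) (g : R -> R) (F : Z -> point d -> R) (E : Z -> R -> R).
Hypothesis i01 : i0 != i1.
Hypothesis F_sc : forall m, separately_convex (F m).
Hypothesis F_diag : forall m u, IZR m - 1 <= u <= IZR m + 2 -> F m (diag d u) = g u.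
Hypothesis E_ge0 : forall m r, 0 <= E m r.
Hypothesis E_box : forall m r x, (forall i, Rabs (x i) <= r) -> F m x <= E m r.
Hypothesis E_diag : forall m r u, Rabs u <= r -> F m (diag d u) - g u <= E m r.

(* Layer j is <= -1 at the diagonal points at distance >= j + 1 from [m, m+1]; its weight
   dominates F_m - g for |u| <= |m| + j + 3, which covers the points far_index assigns to j. *)
Definition weight m j := E m (Rabs (IZR m) + INR j + 3).

Definition cutoff m r := Z.to_nat (up (Rabs (IZR m) + r)).

Definition layer m j (x : point d) :=
  interval_penalty (IZR m - INR j) (IZR m + 1 + INR j) (x i0) (x i1).

Definition penalty m x :=
  fsum (fun j => weight m j * layer m j x) (cutoff m (Rmax (Rabs (x i0)) (Rabs (x i1)))).

Definition rho m := Rabs (IZR m) - 2.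

Definition barrier_weight m :=
  E m (rho m) + fsum (fun j => weight m j * (8 * rho m ^ 2)) (cutoff m (rho m)).

Definition minorant m x :=
  F m x + penalty m x + barrier_weight m * interval_penalty (IZR m) (IZR m + 1) (x i0) (x i1).

Lemma layer_eq0 m j x r : Rabs (x i0) <= r -> Rabs (x i1) <= r ->
  (cutoff m r <= j)%N -> layer m j x = 0.
Proof.
move=> /Rabs_le_bounds H0 /Rabs_le_bounds H1 /lt_INR_of_up Hj.
have := Rabs_le_bounds _ (IZR m) (Rle_refl _).
by move=> Hm; apply: interval_penalty_eq0; lra.
Qed.

Lemma separately_convex_penalty m : separately_convex (penalty m).
Proof.
apply: (separately_convex_fsum (fun j x => weight m j * layer m j x)) => [j|x j Hj].
  apply: separately_convex_scale; first exact: E_ge0.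
  exact: separately_convex_sym_pair i01 (interval_penaltyC _ _) (convex_interval_penalty _ _).
by rewrite (layer_eq0 _ _ _ _ (Rmax_l _ _) (Rmax_r _ _) Hj); ring.
Qed.

Lemma barrier_weight_ge0 m : 0 <= barrier_weight m.
Proof.
have := E_ge0 m (rho m); rewrite /barrier_weight.
suff : 0 <= fsum (fun j => weight m j * (8 * rho m ^ 2)) (cutoff m (rho m)) by lra.
apply: fsum_ge0 => j _; apply: Rmult_le_pos; first exact: E_ge0.
by have := pow2_ge_0 (rho m); lra.
Qed.

Lemma separately_convex_minorant m : separately_convex (minorant m).
Proof.
apply: separately_convex_add.
  exact: separately_convex_add (F_sc m) (separately_convex_penalty m).
apply: separately_convex_scale; first exact: barrier_weight_ge0.
exact: separately_convex_sym_pair i01 (interval_penaltyC _ _) (convex_interval_penalty _ _).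
Qed.

Lemma weighted_layer_diag_le0 m j u : weight m j * layer m j (diag d u) <= 0.
Proof.
have := interval_penalty_diag_le0 (IZR m - INR j) (IZR m + 1 + INR j) u.
by have := E_ge0 m (Rabs (IZR m) + INR j + 3); rewrite /layer /weight /diag; nra.
Qed.

Lemma penalty_diag_le0 m u : penalty m (diag d u) <= 0.
Proof. by apply: fsum_le0 => j _; apply: weighted_layer_diag_le0. Qed.

Lemma minorant_diag_le m u : minorant m (diag d u) <= g u.
Proof.
have Hpen := penalty_diag_le0 m u.
have Hbar : barrier_weight m *
    interval_penalty (IZR m) (IZR m + 1) (diag d u i0) (diag d u i1) <= 0.
  have := barrier_weight_ge0 m; have := interval_penalty_diag_le0 (IZR m) (IZR m + 1) u.
  by rewrite /diag; nra.
rewrite /minorant; have [Hnear|Hfar] := classic (IZR m - 1 <= u <= IZR m + 2).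
  by rewrite F_diag //; lra.
have [j [Hside Habs]] := far_index (IZR m) u Hfar.
have Hlayer : layer m j (diag d u) <= -1.
  apply: interval_penalty_outside; first by have := pos_INR j; lra.
  by rewrite /diag; case: Hside => ?; [left|right]; lra.
have Hj : (j < cutoff m (Rmax (Rabs u) (Rabs u)))%N.
  rewrite ltnNge; apply/negP => Hcut.
  by have := layer_eq0 m j (diag d u) _ (Rmax_l _ _) (Rmax_r _ _) Hcut; lra.
have Hterm : penalty m (diag d u) <= weight m j * layer m j (diag d u).
  by apply: (fsum_le_term (fun j => weight m j * layer m j (diag d u))) Hj => k _;
    apply: weighted_layer_diag_le0.
have := E_diag m _ u Habs; have := E_ge0 m (Rabs (IZR m) + INR j + 3).
by rewrite /weight in Hterm *; nra.
Qed.

Lemma minorant_diag_eq m u : IZR m <= u <= IZR m + 1 -> minorant m (diag d u) = g u.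
Proof.
move=> Hu.
have Hlayer j : layer m j (diag d u) = 0.
  by apply: interval_penalty_eq0; rewrite /diag; have := pos_INR j; lra.
have Hpen : penalty m (diag d u) = 0.
  apply: Rle_antisym; [apply: fsum_le0|apply: fsum_ge0] => j _; rewrite Hlayer; lra.
rewrite /minorant F_diag ?Hpen ?interval_penalty_eq0 /diag; lra.
Qed.

Lemma minorant_far_le0 m x : (forall i, Rabs (x i) <= rho m) -> minorant m x <= 0.
Proof.
move=> Hx; have Hr := Rle_trans _ _ _ (Rabs_pos _) (Hx i0).
have [H0 H1] := (Rabs_le_bounds _ _ (Hx i0), Rabs_le_bounds _ _ (Hx i1)).
set S := fsum (fun j => weight m j * (8 * rho m ^ 2)) (cutoff m (rho m)).
have Hpen : penalty m x <= S.
  set N := cutoff m (Rmax (Rabs (x i0)) (Rabs (x i1))); set n := maxn N (cutoff m (rho m)).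
  have Hvanish r j : Rabs (x i0) <= r -> Rabs (x i1) <= r -> (cutoff m r <= j)%N ->
      weight m j * layer m j x = 0.
    by move=> Hr0 Hr1 Hj; rewrite (layer_eq0 _ _ _ _ Hr0 Hr1 Hj); ring.
  rewrite /penalty -/N -(fsum_stable _ N n) ?leq_maxl //; last first.
    by move=> j; apply: Hvanish; [exact: Rmax_l|exact: Rmax_r].
  rewrite (fsum_stable _ (cutoff m (rho m)) n) ?leq_maxr //; last first.
    by move=> j; apply: Hvanish; apply: Hx.
  apply: fsum_le => j _; apply: Rmult_le_compat_l; first exact: E_ge0.
  have := interval_penalty_le (IZR m - INR j) (IZR m + 1 + INR j) (x i0) (x i1).
  have := Rmult_le_pos (2 * rho m - (x i0 - x i1)) (2 * rho m + (x i0 - x i1)).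
  by rewrite /layer; nra.
have Hbar : interval_penalty (IZR m) (IZR m + 1) (x i0) (x i1) <= -1.
  apply: interval_penalty_outside; first lra.
  move: H0 H1; rewrite /rho; have [Hm|Hm] := Rle_dec 0 (IZR m).
    by rewrite Rabs_right; [left; lra|lra].
  by rewrite Rabs_left; [right; lra|lra].
have := E_box m (rho m) x Hx; have := barrier_weight_ge0 m.
by rewrite /minorant /barrier_weight -/S; nra.
Qed.

Lemma minorant_bounded x : exists B, forall m, minorant m x <= B.
Proof.
have [r Hr] := point_bounded x.
set n := Z.to_nat (up (r + 2)).
have [B HB] := bounded_on_finite_range (minorant^~ x) n.
exists (Rmax 0 B) => m; have [Hm|Hm] := Z_le_dec (Z.abs m) (Z.of_nat n).
  exact: Rle_trans (HB m Hm) (Rmax_r _ _).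
apply: Rle_trans (Rmax_l _ _); apply: minorant_far_le0 => i.
have Hn := lt_INR_of_up (r + 2) n (leqnn n).
have : INR n <= Rabs (IZR m) by rewrite -abs_IZR INR_IZR_INZ; apply: IZR_le; lia.
by have := Hr i; rewrite /rho; lra.
Qed.

End Minorant.

Lemma pointwise_lub_exists {I A : Type} (i : I) (h : I -> A -> R) :
  (forall x, exists B, forall m, h m x <= B) ->
  exists f : A -> R, forall x, is_lub (fun r => exists m, r = h m x) (f x).
Proof.
move=> Hb; apply: (choice (fun x l => is_lub (fun r => exists m, r = h m x) l)) => x.
have [B HB] := Hb x.
have Hbound : bound (fun r => exists m, r = h m x) by exists B => _ [m ->].
have [l Hl] := completeness _ Hbound (ex_intro _ (h i x) (ex_intro _ i erefl)).
by exists l.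
Qed.

Lemma locally_lipschitz_bounded (g : R -> R) (r : R) :
  locally_lipschitz g -> exists c, forall u, Rabs u <= r -> Rabs (g u) <= c.
Proof.
move=> Hg; have [L HL] := Hg (- r) r.
exists (Rabs (g 0) + Rabs L * Rabs r) => u Hu.
have Hu' := Rabs_le_bounds _ _ Hu.
have := HL u 0 Hu' ltac:(lra); rewrite Rminus_0_r => Hgu.
have : L * Rabs u <= Rabs L * Rabs r.
  apply: Rle_trans (Rle_abs _) _; rewrite Rabs_mult Rabs_Rabsolu.
  apply: Rmult_le_compat_l; [exact: Rabs_pos|exact: Rle_trans Hu (Rle_abs r)].
have := Rabs_triang_inv (g u) (g 0); lra.
Qed.

Lemma separately_convex_diag_envelope {d} (f : point d -> R) (g : R -> R) (r : R) :
  separately_convex f -> locally_lipschitz g -> exists e, 0 <= e /\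
    (forall x, (forall i, Rabs (x i) <= r) -> f x <= e) /\
    (forall u, Rabs u <= r -> f (diag d u) - g u <= e).
Proof.
move=> Hf Hg; have [K HK] := separately_convex_bounded_above f r Hf.
have [c Hc] := locally_lipschitz_bounded g r Hg.
have := Rmax_l 0 K; have := Rmax_r 0 K; have := Rmax_l 0 c; have := Rmax_r 0 c.
exists (Rmax 0 K + Rmax 0 c); split; first lra.
split=> [x /HK|u Hu]; first lra.
have := HK (diag d u) (fun _ => Hu); have := Rabs_le_bounds _ _ (Hc u Hu); lra.
Qed.

Theorem proposition2p2 (d : nat) (g : R -> R) :
  (2 <= d)%N ->
  locally_lipschitz g ->
  (forall a b : R, a <= b -> exists f : point d -> R,
      separately_convex f /\ forall u, a <= u <= b -> f (diag d u) = g u) ->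
  exists f : point d -> R,
    separately_convex f /\ forall u : R, f (diag d u) = g u.
Proof.
move=> Hd Hg Hloc.
pose i0 : 'I_d := Ordinal (ltnW Hd); pose i1 : 'I_d := Ordinal Hd.
have i01 : i0 != i1 by [].
have [F HF] := choice (fun (m : Z) (f : point d -> R) => separately_convex f /\
  forall u, IZR m - 1 <= u <= IZR m + 2 -> f (diag d u) = g u)
  (fun m => Hloc (IZR m - 1) (IZR m + 2) ltac:(lra)).
have F_sc m := proj1 (HF m); have F_diag m := proj2 (HF m).
have Henv m r := separately_convex_diag_envelope (F m) g r (F_sc m) Hg.
have [E HE] := choice _ (fun m => choice _ (Henv m)).
have E_ge0 m r := proj1 (HE m r); have E_box m r := proj1 (proj2 (HE m r)).
have E_diag m r := proj2 (proj2 (HE m r)).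
have [f Hf] := pointwise_lub_exists 0%Z (minorant i0 i1 F E)
  (minorant_bounded i0 i1 F E i01 E_ge0 E_box).
exists f; split.
  exact: separately_convex_lub (separately_convex_minorant i0 i1 F E i01 F_sc E_ge0) Hf.
move=> u; have [Hub Hleast] := Hf (diag d u); apply: Rle_antisym.
  by apply: Hleast => _ [m ->]; apply: minorant_diag_le.
have [Hup1 Hup2] := archimed u.
rewrite -(minorant_diag_eq i0 i1 g F E F_diag (up u - 1) u).
  exact: Hub _ (ex_intro _ _ erefl).
by rewrite minus_IZR; lra.
Qed.
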